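(* Let $\mathbb{K}$ be a field, $S=\mathbb{K}[x_1,\ldots,x_n]$, and let $I\subseteq S$ be a support-$2$ monomial ideal whose irreducible decomposition is minimal. If $\alpha_{i,j}\geq 2$ for some $1\le i,j\le n$, then $I^{(2)}\neq I^2$.
   Context: For a monomial ideal $I$, $\mathcal{G}(I)$ denotes its minimal set of monomial generators. $I$ is a support-$2$ monomial ideal if $\mathcal{G}(I)\subseteq\{x_i^ax_j^b : 1\le i<j\le n,\ a,b\ge 1\}$. For $i\neq j$, $\alpha_{i,j}$ is the number of elements of $\mathcal{G}(I)$ whose support is exactly $\{x_i,x_j\}$. Symbolic power: $I^{(s)}=\bigcap_{P\in\mathrm{MinAss}(I)}(I^sS_P\cap S)$ over the minimal primes of $I$. Irreducible monomial ideals are those generated by pure powers of variables; every monomial ideal has a unique irredundant decomposition $I=\bigcap Q_i$ into irreducible monomial ideals, called minimal if $\sqrt{Q_i}\ne\sqrt{Q_j}$ for $i\neq j$. *)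

From mathcomp Require Import all_boot all_algebra.
From mathcomp Require Export mpoly.
Set Implicit Arguments. Unset Strict Implicit. Unset Printing Implicit Defensive.
Import GRing.Theory.
Local Open Scope ring_scope.

Section Ideals.
Variables (K : fieldType) (n : nat).
Local Notation S := {mpoly K[n]}.

Definition ideal_eq (I J : S -> Prop) : Prop := forall f, I f <-> J f.

Definition ideal_gen (A : S -> Prop) : S -> Prop :=
  fun f => exists s : seq (S * S),
    (forall p, p \in s -> A p.2) /\ f = \sum_(p <- s) p.1 * p.2.

Definition is_ideal (I : S -> Prop) : Prop :=
  I 0 /\ (forall f g, I f -> I g -> I (f + g)) /\ (forall a f, I f -> I (a * f)).

Definition ideal_pow (I : S -> Prop) (s : nat) : S -> Prop :=
  ideal_gen (fun g => exists l : seq S,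
    size l = s /\ (forall a, a \in l -> I a) /\ g = \prod_(a <- l) a).

Definition is_prime (P : S -> Prop) : Prop :=
  is_ideal P /\ ~ P 1 /\ (forall f g, P (f * g) -> P f \/ P g).

Definition is_min_prime (I P : S -> Prop) : Prop :=
  is_prime P /\ (forall f, I f -> P f) /\
  (forall Q, is_prime Q -> (forall f, I f -> Q f) -> (forall f, Q f -> P f) ->
     ideal_eq Q P).

(* Symbolic power: I^(s) = \bigcap_{P in MinAss(I)} (I^s S_P \cap S);
   f lies in I^s S_P \cap S iff g f \in I^s for some g \notin P. *)
Definition symbolic_pow (I : S -> Prop) (s : nat) : S -> Prop :=
  fun f => forall P, is_min_prime I P ->
    exists g, ~ P g /\ ideal_pow I s (g * f).

Definition radical (I : S -> Prop) : S -> Prop :=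
  fun f => exists k : nat, I (f ^+ k).

Definition monom (m : 'X_{1..n}) : S := 'X_[m].

Definition mdivides (m m' : 'X_{1..n}) : bool := [forall i, (m i <= m' i)%N].

Definition monomial_ideal_of (G : seq 'X_{1..n}) : S -> Prop :=
  ideal_gen (fun g => exists2 m, m \in G & g = monom m).

Definition is_min_mon_gens (I : S -> Prop) (G : seq 'X_{1..n}) : Prop :=
  uniq G /\ ideal_eq I (monomial_ideal_of G) /\
  (forall m m', m \in G -> m' \in G -> m != m' -> ~~ mdivides m m').

Definition support2 (G : seq 'X_{1..n}) : Prop :=
  forall m, m \in G -> exists i j : 'I_n,
    (i < j)%N /\ (0 < m i)%N /\ (0 < m j)%N /\
    (forall k, k != i -> k != j -> m k = 0%N).

Definition alpha (G : seq 'X_{1..n}) (i j : 'I_n) : nat :=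
  count (fun m : 'X_{1..n} => [forall k, (m k != 0%N) == ((k == i) || (k == j))]) G.

(* Irreducible monomial ideal given by exponents e: generated by the pure
   powers x_i^(e i) for those i with e i > 0 (e = 0 gives the zero ideal). *)
Definition irred_ideal (e : 'I_n -> nat) : S -> Prop :=
  ideal_gen (fun g => exists2 i : 'I_n, (0 < e i)%N & g = 'X_i ^+ e i).

(* I = \bigcap Q_k is an irredundant irreducible decomposition whose
   components have pairwise distinct radicals (a "minimal" decomposition). *)
Definition minimal_irred_decomp (I : S -> Prop) (Qs : seq ('I_n -> nat)) : Prop :=
  ideal_eq I (fun f => forall k, (k < size Qs)%N -> irred_ideal (nth (fun _ => 0%N) Qs k) f) /\
  (forall k, (k < size Qs)%N -> ~ ideal_eq I
     (fun f => forall l, (l < size Qs)%N -> l != k ->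
        irred_ideal (nth (fun _ => 0%N) Qs l) f)) /\
  (forall k l, (k < size Qs)%N -> (l < size Qs)%N -> k != l ->
     ~ ideal_eq (radical (irred_ideal (nth (fun _ => 0%N) Qs k)))
                (radical (irred_ideal (nth (fun _ => 0%N) Qs l)))).

End Ideals.

(* Let u, v be the two minimal generators supported on {x_i, x_j} with the smallest
   x_i-exponents; as G(I) is an antichain, u_i < v_i and v_j < u_j.  Put
   x^gap = x^u x^v / (x_i x_j).  No product of two minimal generators divides x^gap, so
   x^gap is not in I^2.  A minimal prime P of I is the radical (x_l : e_l > 0) of some
   component Q_e, and because the components have distinct radicals, every other
   component contains a pure power of a variable outside P.  Hence a large power h of the
   variables outside P satisfies h x_l^(e_l) in I whenever e_l > 0.  Since x^u and x^v lie
   in Q_e, two such pure powers divide x^gap, so h^2 x^gap lies in I^2 with h^2 not in P: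
   x^gap lies in I^(2). *)

From mathcomp Require Import all_boot all_algebra.
From mathcomp Require Import mpoly.
From mathcomp Require Import zify.
From Stdlib Require Import Classical.
Set Implicit Arguments. Unset Strict Implicit. Unset Printing Implicit Defensive.
Import GRing.Theory.
Local Open Scope ring_scope.

Section IdealTheory.
Variables (K : fieldType) (n : nat).
Local Notation S := {mpoly K[n]}.
Implicit Types (A I J P Q : S -> Prop) (f g : S) (E : pred 'I_n) (m : 'X_{1..n}).
Implicit Types (e : 'I_n -> nat) (l : 'I_n).

Lemma ideal_gen_ideal A : is_ideal (ideal_gen A).
Proof.
split; [|split].
- by exists [::]; rewrite big_nil.
- move=> f g [s [Hs ->]] [t [Ht ->]]; exists (s ++ t); split; last by rewrite big_cat.
  by move=> p; rewrite mem_cat => /orP [/Hs|/Ht].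
- move=> a f [s [Hs ->]]; exists [seq (a * p.1, p.2) | p <- s]; split.
  + by move=> p /mapP [q /Hs Hq ->].
  + by rewrite big_map mulr_sumr; apply: eq_bigr => p _; rewrite mulrA.
Qed.

Lemma ideal_gen_mem A f : A f -> ideal_gen A f.
Proof.
move=> Af; exists [:: (1, f)]; split; first by move=> p; rewrite inE => /eqP ->.
by rewrite big_seq1 mul1r.
Qed.

Lemma ideal_gen_sub A J : is_ideal J -> (forall f, A f -> J f) ->
  forall f, ideal_gen A f -> J f.
Proof.
move=> [J0 [JD JM]] AJ f [s [Hs ->]]; elim: s Hs => [|p s IHs] Hs; first by rewrite big_nil.
rewrite big_cons; apply: JD; first by apply/JM/AJ/Hs; rewrite inE eqxx.
by apply: IHs => q Hq; apply: Hs; rewrite inE Hq orbT.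
Qed.

Section IdealLemmas.
Variable J : S -> Prop.
Hypothesis HJ : is_ideal J.

Lemma ideal0 : J 0.
Proof. by case: HJ. Qed.

Lemma idealD f g : J f -> J g -> J (f + g).
Proof. by case: HJ => _ [JD _]; apply: JD. Qed.

Lemma idealMl a f : J f -> J (a * f).
Proof. by case: HJ => _ [_ JM]; apply: JM. Qed.

Lemma idealMr a f : J f -> J (f * a).
Proof. by rewrite mulrC; apply: idealMl. Qed.

Lemma idealZ c f : J f -> J (c *: f).
Proof. by rewrite -mul_mpolyC; apply: idealMl. Qed.

Lemma ideal_sum (I : eqType) (r : seq I) (F : I -> S) :
  (forall x, x \in r -> J (F x)) -> J (\sum_(x <- r) F x).
Proof.
elim: r => [|x r IHr] Fr; first by rewrite big_nil; apply: ideal0.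
rewrite big_cons; apply: idealD; first by apply: Fr; rewrite inE eqxx.
by apply: IHr => y ry; apply: Fr; rewrite inE ry orbT.
Qed.

Lemma ideal_memX_le m' m : J 'X_[m'] -> (m' <= m)%MM -> J 'X_[m].
Proof. by move=> Jm' lem; rewrite -(submK lem) mpolyXD; apply: idealMl. Qed.

(* (f + g)^(k1 + k2) expands into terms each divisible by f^k1 or by g^k2. *)
Lemma radical_ideal : is_ideal (radical J).
Proof.
split; [|split].
- by exists 1%N; rewrite expr1; apply: ideal0.
- move=> f g [k1 Jf] [k2 Jg]; exists (k1 + k2)%N; rewrite exprDn.
  rewrite -big_enum; apply: ideal_sum => i _; rewrite -mulr_natl; apply: idealMl.
  have [le_k2i|lt_ik2] := leqP k2 i.
    by rewrite -(subnK le_k2i) exprD mulrA; apply: idealMl.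
  have le_k1 : (k1 <= k1 + k2 - i)%N by lia.
  by rewrite -(subnK le_k1) exprD -mulrA; apply/idealMl/idealMr.
- by move=> a f [k Jf]; exists k; rewrite exprMn; apply: idealMl.
Qed.

End IdealLemmas.

Lemma prime_radical P f : is_prime P -> radical P f -> P f.
Proof.
move=> [_ [notP1 PM]] [k]; elim: k => [|k IHk]; first by rewrite expr0.
by rewrite exprS => /PM [].
Qed.

Lemma prime_sub_cap P (Js : nat -> S -> Prop) N : is_prime P ->
  (forall k, (k < N)%N -> is_ideal (Js k)) ->
  (forall f, (forall k, (k < N)%N -> Js k f) -> P f) ->
  exists2 k, (k < N)%N & forall f, Js k f -> P f.
Proof.
move=> [_ [notP1 PM]] Js_ideal capP; apply: NNPP => noJ.
have outside k : (k < N)%N -> exists2 q, Js k q & ~ P q.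
  move=> ltkN; apply: NNPP => noq; apply: noJ; exists k => // f Jf.
  by apply: NNPP => Pf; apply: noq; exists f.
suff [q Jq] : exists2 q, (forall k, (k < N)%N -> Js k q) & ~ P q by apply; apply: capP.
elim: N Js_ideal outside {capP noJ} => [|N IHN] Js_ideal outside; first by exists 1.
have [q Jq Pq] := IHN (fun k lt => Js_ideal k (ltnW lt)) (fun k lt => outside k (ltnW lt)).
have [r Jr Pr] := outside N (ltnSn N).
exists (q * r); last by case/PM.
move=> k; rewrite ltnS leq_eqVlt => /orP [/eqP -> | ltkN].
- exact: (idealMl (Js_ideal N (ltnSn N)) q Jr).
- exact: (idealMr (Js_ideal k (ltnW ltkN)) r (Jq k ltkN)).
Qed.

Definition mon_multiples (M : 'X_{1..n} -> Prop) : S -> Prop :=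
  fun f => forall m, m \in msupp f -> exists2 m', M m' & (m' <= m)%MM.

Lemma mon_multiples_ideal M : is_ideal (mon_multiples M).
Proof.
split; [|split].
- by move=> m; rewrite msupp0.
- by move=> f g Mf Mg m /msuppD_le; rewrite mem_cat => /orP [/Mf|/Mg].
- move=> a f Mf m /msuppM_le /allpairsP [[m1 m2] /= [_ /Mf [m' Mm' le_m'] ->]].
  by exists m' => //; apply: lepm_trans le_m' (lem_addl _ _).
Qed.

Lemma mon_multiplesX M m :
  mon_multiples M 'X_[m] <-> exists2 m', M m' & (m' <= m)%MM.
Proof.
split; first by apply; rewrite msuppX mem_head.
by move=> Mm m1; rewrite msuppX inE => /eqP ->.
Qed.

Lemma mon_multiplesM M1 M2 f g : mon_multiples M1 f -> mon_multiples M2 g ->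
  mon_multiples (fun m => exists m1 m2, [/\ M1 m1, M2 m2 & m = (m1 + m2)%MM]) (f * g).
Proof.
move=> Mf Mg m /msuppM_le /allpairsP [[m1 m2] /= [/Mf [m1' M1m1' le1] /Mg [m2' M2m2' le2] ->]].
exists (m1' + m2')%MM; first by exists m1', m2'.
by apply/mnm_lepP => k; rewrite !mnmDE leq_add //; apply/mnm_lepP.
Qed.

Lemma ideal_gen_memX A M m : (forall a, A a -> exists2 m', M m' & a = 'X_[m']) ->
  ideal_gen A 'X_[m] -> exists2 m', M m' & (m' <= m)%MM.
Proof.
move=> AM /(ideal_gen_sub (mon_multiples_ideal M)) AXm; apply/mon_multiplesX/AXm.
by move=> a /AM [m' Mm' ->]; apply/mon_multiplesX; exists m' => //; apply: lepm_refl.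
Qed.

Lemma ideal_pow2_memX I m1 m2 m : I 'X_[m1] -> I 'X_[m2] -> (m1 + m2 <= m)%MM ->
  ideal_pow I 2 'X_[m].
Proof.
move=> Im1 Im2 le_m; apply: (ideal_memX_le (ideal_gen_ideal _) _ le_m); apply: ideal_gen_mem.
exists [:: 'X_[m1]; 'X_[m2]]; split=> //; split; last by rewrite big_cons big_seq1 mpolyXD.
by move=> a; rewrite !inE => /orP [] /eqP ->.
Qed.

Lemma monomial_ideal_pow2_memX I G m : ideal_eq I (monomial_ideal_of G) ->
  ideal_pow I 2 'X_[m] -> exists m1 m2, [/\ m1 \in G, m2 \in G & (m1 + m2 <= m)%MM].
Proof.
move=> IG I2m.
have IM f : I f -> mon_multiples (fun m => m \in G) f.
  move=> /IG; apply: (ideal_gen_sub (mon_multiples_ideal _)) => _ [m' Gm' ->].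
  by apply/mon_multiplesX; exists m' => //; apply: lepm_refl.
have : mon_multiples (fun m => exists m1 m2, [/\ m1 \in G, m2 \in G & m = (m1 + m2)%MM])
                     'X_[m].
  apply: (ideal_gen_sub (mon_multiples_ideal _)) I2m.
  move=> g [[|a [|b [|c l]]] [//= _ [Il ->]]].
  by rewrite big_cons big_seq1; apply: mon_multiplesM; apply/IM/Il; rewrite !inE eqxx ?orbT.
by case/mon_multiplesX => _ [m1 [m2 [G1 G2 ->]]] le_m; exists m1, m2.
Qed.

Lemma is_prime_eq P Q : ideal_eq P Q -> is_prime Q -> is_prime P.
Proof.
move=> PQ [[Q0 [QD QM]] [Q1 QP]]; split; [split; [|split]|split].
- exact/PQ.
- by move=> f g /PQ Pf /PQ Pg; apply/PQ/QD.
- by move=> a f /PQ Pf; apply/PQ/QM.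
- by move/PQ.
- by move=> f g /PQ /QP [] /PQ; [left|right].
Qed.

Definition var_ideal (E : pred 'I_n) : S -> Prop :=
  ideal_gen (fun g => exists2 l, E l & g = 'X_l).

Lemma var_ideal_sub (E E' : pred 'I_n) f : (forall l, E l -> E' l) ->
  var_ideal E f -> var_ideal E' f.
Proof.
move=> EE'; apply: (ideal_gen_sub (ideal_gen_ideal _)) => _ [l El ->].
by apply: ideal_gen_mem; exists l => //; apply: EE'.
Qed.

Definition kill_vars (E : pred 'I_n) (p : S) : S :=
  mmap (@mpolyC n K) (fun l => if E l then 0 else 'X_l) p.

Lemma kill_varsX E m :
  kill_vars E 'X_[m] = if [forall l, E l ==> (m l == 0%N)] then 'X_[m] else 0.
Proof.
rewrite /kill_vars mmapX /mmap1; case: ifP => [/forallP avoid | /negbT/forallPn [l]].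
  rewrite [RHS]mpolyXE_id; apply: eq_bigr => l _.
  by have := avoid l; case: (E l) => //= /eqP ->; rewrite !expr0.
rewrite negb_imply => /andP [El ml]; rewrite (bigD1 l) //= El expr0n (negbTE ml).
by rewrite mul0r.
Qed.

Lemma kill_vars_sum E (r : seq 'X_{1..n}) (F : 'X_{1..n} -> S) :
  kill_vars E (\sum_(m <- r) F m) = \sum_(m <- r) kill_vars E (F m).
Proof. by rewrite /kill_vars; apply: raddf_sum. Qed.

Lemma kill_varsZ E c p : kill_vars E (c *: p) = c *: kill_vars E p.
Proof. by rewrite /kill_vars mmapZ mul_mpolyC. Qed.

Lemma kill_vars_kernel_prime E : is_prime (fun f => kill_vars E f = 0).
Proof.
rewrite /kill_vars; split; [split; [|split]|split].
- exact: rmorph0.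
- by move=> f g f0 g0; rewrite rmorphD /= f0 g0 addr0.
- by move=> a f f0; rewrite rmorphM /= f0 mulr0.
- by rewrite rmorph1; apply/eqP/oner_neq0.
- by move=> f g /eqP; rewrite rmorphM mulf_eq0 => /orP [] /eqP; [left|right].
Qed.

Lemma var_idealP E f : var_ideal E f <-> kill_vars E f = 0.
Proof.
split.
  apply: (ideal_gen_sub (proj1 (kill_vars_kernel_prime E))) => _ [l El ->].
  by rewrite kill_varsX; case: ifP => // /forallP /(_ l); rewrite El mnm1E eqxx.
move=> kill0; have -> : f = f - kill_vars E f by rewrite kill0 subr0.
rewrite {1 2}[f]mpolyE kill_vars_sum -sumrB; apply: (ideal_sum (ideal_gen_ideal _)).
move=> m _; rewrite kill_varsZ -scalerBr.
apply: (idealZ (ideal_gen_ideal _)); rewrite kill_varsX.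
case: ifP => [_ | /negbT/forallPn [l]].
  by rewrite subrr; exact: (ideal0 (ideal_gen_ideal _)).
rewrite negb_imply subr0 => /andP [El ml].
apply: (ideal_memX_le (ideal_gen_ideal _) _ (_ : U_(l) <= m)%MM); last by rewrite lep1mP.
by apply: ideal_gen_mem; exists l.
Qed.

Lemma var_ideal_prime E : is_prime (var_ideal E).
Proof. exact: is_prime_eq (var_idealP E) (kill_vars_kernel_prime E). Qed.

Lemma var_idealX_avoid E m : (forall l, E l -> m l = 0%N) -> ~ var_ideal E 'X_[m].
Proof.
move=> avoid /var_idealP; rewrite kill_varsX; case: ifP => [_|/forallP []].
  by apply/eqP; rewrite -msupp_eq0 msuppX.
by move=> l; apply/implyP => /avoid ->.
Qed.

Definition irred_vars (e : 'I_n -> nat) : pred 'I_n := fun l => (0 < e l)%N.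

Lemma irred_ideal_pure_pow e l : (0 < e l)%N -> irred_ideal e ('X_[U_(l) *+ e l] : S).
Proof. by move=> e_l; apply: ideal_gen_mem; exists l; rewrite ?mpolyXn. Qed.

Lemma irred_memX e m : irred_ideal e ('X_[m] : S) -> exists2 l, (0 < e l)%N & (e l <= m l)%N.
Proof.
have pure_powX (a : S) : (exists2 l, (0 < e l)%N & a = 'X_l ^+ e l) ->
    exists2 m', (exists2 l, (0 < e l)%N & m' = (U_(l) *+ e l)%MM) & a = 'X_[m'].
  by case=> l e_l ->; exists (U_(l) *+ e l)%MM; [exists l | rewrite mpolyXn].
case/(ideal_gen_memX pure_powX) => _ [l e_l ->] /mnm_lepP /(_ l).
by rewrite mulmnE mnm1E eqxx mul1n; exists l.
Qed.

Lemma irred_ideal_sub_vars e f : irred_ideal e f -> var_ideal (irred_vars e) f.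
Proof.
apply: (ideal_gen_sub (ideal_gen_ideal _)) => _ [l e_l ->].
rewrite mpolyXn; apply: (ideal_memX_le (ideal_gen_ideal _) _ (_ : U_(l) <= U_(l) *+ e l)%MM).
  by apply: ideal_gen_mem; exists l.
by rewrite lep1mP mulmnE mnm1E eqxx mul1n -lt0n.
Qed.

Lemma radical_irred_ideal e f : radical (irred_ideal e) f <-> var_ideal (irred_vars e) f.
Proof.
split=> [[k /irred_ideal_sub_vars var_fk] | ].
  by apply: (prime_radical (var_ideal_prime _)); exists k.
apply: (ideal_gen_sub (radical_ideal (ideal_gen_ideal _))) => _ [l e_l ->].
by exists (e l); apply: ideal_gen_mem; exists l.
Qed.

End IdealTheory.

Arguments var_ideal_prime {K n} E.
Arguments irred_ideal_pure_pow {K n e l}.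

Section PairSupport.
Variables (n : nat) (i j : 'I_n).
Hypothesis neq_ij : i != j.
Implicit Types (a b g m u v : 'X_{1..n}) (G : seq 'X_{1..n}).

Definition supp_pair m : bool := [forall k, (m k != 0%N) == ((k == i) || (k == j))].

Lemma supp_pairP m : reflect
  [/\ 0 < m i, 0 < m j & forall k, k != i -> k != j -> m k = 0]%N (supp_pair m).
Proof.
apply: (iffP forallP) => [supp_m | [mi mj off]].
  split; first by have := supp_m i; rewrite eqxx lt0n => /eqP ->.
    by have := supp_m j; rewrite eqxx orbT lt0n => /eqP ->.
  by move=> k ki kj; have := supp_m k; rewrite (negbTE ki) (negbTE kj); case: (m k).
move=> k; case: (eqVneq k i) => [->|ki]; first by rewrite -lt0n mi.
case: (eqVneq k j) => [->|kj]; first by rewrite -lt0n mj.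
by rewrite off.
Qed.

Lemma support2_supp_pair G g : support2 G -> g \in G ->
  (forall k, k != i -> k != j -> g k = 0%N) -> supp_pair g.
Proof.
move=> G2 Gg off; have [i1 [j1 [lt_ij1 [gi1 [gj1 _]]]]] := G2 g Gg.
have on_ij k : (0 < g k)%N -> (k == i) || (k == j).
  by apply: contraTT; rewrite negb_or => /andP [ki kj]; rewrite off.
case/orP: (on_ij _ gi1) => /eqP ?; case/orP: (on_ij _ gj1) => /eqP ?; subst i1 j1.
all: by [rewrite ltnn in lt_ij1 | apply/supp_pairP].
Qed.

Lemma mdividesE a b : mdivides a b = (a <= b)%MM.
Proof. exact/forallP/mnm_lepP. Qed.

Lemma lepm_pair a b : (forall k, k != i -> k != j -> a k = 0%N) ->
  (a i <= b i)%N -> (a j <= b j)%N -> (a <= b)%MM.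
Proof.
move=> off ab_i ab_j; apply/mnm_lepP => k.
case: (eqVneq k i) => [->|ki] //; case: (eqVneq k j) => [->|kj] //.
by rewrite off.
Qed.

Lemma incomparable_pair a b : supp_pair a -> supp_pair b ->
  ~~ mdivides a b -> ~~ mdivides b a -> (a i <= b i)%N -> (a i < b i /\ b j < a j)%N.
Proof.
move=> /supp_pairP [_ _ off_a] /supp_pairP [_ _ off_b] ndiv_ab ndiv_ba ab_i.
have ba_j : (b j < a j)%N.
  by rewrite ltnNge; apply: contra ndiv_ab; rewrite mdividesE; apply: lepm_pair.
split=> //; rewrite ltn_neqAle ab_i andbT; apply: contra ndiv_ba => /eqP ab_i'.
by rewrite mdividesE; apply: lepm_pair; rewrite // ?ab_i' // ltnW.
Qed.

Lemma two_lowest_gens G : uniq G ->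
  (forall m m', m \in G -> m' \in G -> m != m' -> ~~ mdivides m m') ->
  (2 <= count supp_pair G)%N ->
  exists u v, [/\ u \in G, v \in G, supp_pair u, supp_pair v &
    [/\ u i < v i, v j < u j
      & forall g, g \in G -> supp_pair g -> g != u -> v i <= g i]%N].
Proof.
move=> uniqG antichain count2.
pose le_i := [rel a b : 'X_{1..n} | a i <= b i]%N.
pose T := sort le_i (filter supp_pair G).
have memT g : g \in T = (g \in G) && supp_pair g by rewrite mem_sort mem_filter andbC.
have : uniq T by rewrite sort_uniq filter_uniq.
have : sorted le_i T by apply: sort_sorted => a b; apply: leq_total.
have : (2 <= size T)%N by rewrite size_sort size_filter.
case: T memT => [|u [|v rest]] //= memT _ /andP [le_uv path_v] /andP [].
rewrite !inE negb_or => /andP [neq_uv _] _.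
have /andP [Gu su] : (u \in G) && supp_pair u by rewrite -memT !inE eqxx.
have /andP [Gv sv] : (v \in G) && supp_pair v by rewrite -memT !inE eqxx orbT.
have neq_vu : v != u by rewrite eq_sym.
have [lt_uv_i lt_vu_j] := incomparable_pair su sv (antichain _ _ Gu Gv neq_uv)
  (antichain _ _ Gv Gu neq_vu) le_uv.
exists u, v; split=> //; split=> // g Gg sg neq_gu.
have := order_path_min (fun a b c => @leq_trans (a i) (b i) (c i)) path_v.
move/allP => v_min; have : g \in [:: u, v & rest] by rewrite memT Gg sg.
by rewrite !inE (negbTE neq_gu) => /or3P [// | /eqP -> | /v_min].
Qed.

Variables (u v : 'X_{1..n}).
Hypotheses (su : supp_pair u) (sv : supp_pair v).
Hypotheses (lt_uv_i : (u i < v i)%N) (lt_vu_j : (v j < u j)%N).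
Local Notation gap := (u + v - (U_(i) + U_(j)))%MM.

Lemma gapE k : gap k = (u k + v k - ((i == k) + (j == k)))%N.
Proof. by rewrite mnmBE !mnmDE !mnm1E. Qed.

Lemma gap_notin_pow2 (K : fieldType) (I : {mpoly K[n]} -> Prop) G :
  ideal_eq I (monomial_ideal_of G) -> support2 G -> u \in G ->
  (forall g, g \in G -> supp_pair g -> g != u -> v i <= g i)%N ->
  ~ ideal_pow I 2 'X_[gap].
Proof.
move=> IG G2 Gu v_min /(monomial_ideal_pow2_memX IG) [m1 [m2 [Gm1 Gm2 /mnm_lepP le_gap]]].
case/supp_pairP: su => _ _ off_u; case/supp_pairP: sv => _ _ off_v.
have off k : k != i -> k != j -> (m1 k = 0 /\ m2 k = 0)%N.
  move=> ki kj; have := le_gap k; rewrite mnmDE gapE off_u // off_v //.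
  by rewrite eq_sym (negbTE ki) eq_sym (negbTE kj) leqn0 addn_eq0 => /andP [/eqP -> /eqP ->].
have sm1 := support2_supp_pair G2 Gm1 (fun k ki kj => (off k ki kj).1).
have sm2 := support2_supp_pair G2 Gm2 (fun k ki kj => (off k ki kj).2).
have u_min g : g \in G -> supp_pair g -> (u i <= g i)%N.
  by move=> Gg sg; case: (eqVneq g u) => [-> // | /(v_min g Gg sg)]; apply/leq_trans/ltnW.
have := le_gap i; have := le_gap j.
rewrite !mnmDE !gapE !eqxx (negbTE neq_ij) eq_sym (negbTE neq_ij) /=.
have := u_min _ Gm1 sm1; have := u_min _ Gm2 sm2.
case: (eqVneq m1 u) => [->|/(v_min _ Gm1 sm1)]; last by lia.
case: (eqVneq m2 u) => [->|/(v_min _ Gm2 sm2)]; lia.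
Qed.

Lemma pure_pows_below_gap (e : 'I_n -> nat) :
  (exists2 l, 0 < e l & e l <= u l)%N -> (exists2 l, 0 < e l & e l <= v l)%N ->
  exists l1 l2, [/\ 0 < e l1, 0 < e l2 & (U_(l1) *+ e l1 + U_(l2) *+ e l2 <= gap)%MM]%N.
Proof.
case/supp_pairP: su => ui uj off_u; case/supp_pairP: sv => vi vj off_v.
have on_ij (w : 'X_{1..n}) l : (forall k, k != i -> k != j -> w k = 0%N) ->
    (0 < e l)%N -> (e l <= w l)%N -> (l == i) || (l == j).
  move=> off_w el_pos; apply: contraTT; rewrite negb_or => /andP [li lj].
  by rewrite off_w // -ltnNge.
move=> [l1 el1 e_u] [l2 el2 e_v]; have neq_ji : j != i by rewrite eq_sym.
case/orP: (on_ij _ _ off_u el1 e_u) => /eqP ?; subst l1;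
  [exists i; exists i | case/orP: (on_ij _ _ off_v el2 e_v) => /eqP ?; subst l2;
  [exists j; exists i | exists j; exists j]]; split=> //.
all: apply: lepm_pair => [k ki kj||]; rewrite !mnmDE !mulmnE !mnm1E ?gapE.
all: rewrite ?(eq_sym i k) ?(eq_sym j k) ?(negbTE ki) ?(negbTE kj) //.
all: rewrite !eqxx ?(negbTE neq_ij) ?(negbTE neq_ji) /=; lia.
Qed.

End PairSupport.

Section MinimalPrimes.
Variables (K : fieldType) (n : nat) (I : {mpoly K[n]} -> Prop) (Qs : seq ('I_n -> nat)).
Local Notation exps k := (nth (fun _ => 0%N) Qs k).
Local Notation Q k := (@irred_ideal K n (exps k)).
Implicit Types (P : {mpoly K[n]} -> Prop) (f : {mpoly K[n]}).
Hypothesis I_cap : ideal_eq I (fun f => forall k, (k < size Qs)%N -> Q k f).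

Lemma ideal_sub_component_vars k f : (k < size Qs)%N -> I f ->
  var_ideal (irred_vars (exps k)) f.
Proof. by move=> ltk /I_cap /(_ k ltk) /irred_ideal_sub_vars. Qed.

Lemma component_memX k m : (k < size Qs)%N -> I 'X_[m] ->
  exists2 l, (0 < exps k l)%N & (exps k l <= m l)%N.
Proof. by move=> ltk /I_cap /(_ k ltk) /irred_memX. Qed.

Lemma min_prime_var_ideal P : is_min_prime I P ->
  exists2 k, (k < size Qs)%N & ideal_eq (var_ideal (irred_vars (exps k))) P.
Proof.
move=> [Pprime [IP Pmin]].
have [k ltk QkP] := prime_sub_cap Pprime (fun k _ => ideal_gen_ideal _)
  (fun f cap_f => IP f (proj2 (I_cap f) cap_f)).
exists k => //; apply: (Pmin _ (var_ideal_prime _)) => f.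
  exact: ideal_sub_component_vars.
case/radical_irred_ideal => m Qfm; apply: prime_radical Pprime _.
by exists m; apply: QkP.
Qed.

Hypothesis Q_radicals_distinct :
  forall k l, (k < size Qs)%N -> (l < size Qs)%N -> k != l ->
  ~ ideal_eq (radical (Q k)) (radical (Q l)).

Lemma min_prime_other_component P k k' : is_min_prime I P ->
  ideal_eq (var_ideal (irred_vars (exps k))) P -> (k < size Qs)%N -> (k' < size Qs)%N ->
  k' != k -> exists l, (0 < exps k' l)%N && (exps k l == 0%N).
Proof.
move=> [_ [_ Pmin]] PE ltk ltk' neq.
case: (boolP [exists l, (0 < exps k' l)%N && (exps k l == 0%N)]) => [/existsP //|].
move=> /existsPn no_new; exfalso.
have sub l : (0 < exps k' l)%N -> (0 < exps k l)%N.
  by move=> Qk'l; move: (no_new l); rewrite Qk'l lt0n.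
have P'E : ideal_eq (var_ideal (irred_vars (exps k'))) P.
  apply: (Pmin _ (var_ideal_prime _)) => f; first exact: ideal_sub_component_vars.
  by move/(var_ideal_sub sub)/PE.
apply: (Q_radicals_distinct ltk' ltk neq) => f.
split=> /radical_irred_ideal var_f; apply/radical_irred_ideal.
  by apply/(PE f)/(P'E f).
by apply/(P'E f)/(PE f).
Qed.

Lemma component_witness k : (k < size Qs)%N ->
  (forall k', (k' < size Qs)%N -> k' != k ->
     exists l, (0 < exps k' l)%N && (exps k l == 0%N)) ->
  exists2 h : 'X_{1..n}, (forall l, 0 < exps k l -> h l = 0)%N
    & forall l, (0 < exps k l)%N -> I 'X_[U_(l) *+ exps k l + h].
Proof.
move=> ltk other; pose N := \max_(k' < size Qs) \max_(l < n) exps k' l.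
have le_N k' l : (k' < size Qs)%N -> (exps k' l <= N)%N.
  move=> ltk'; apply: leq_trans (leq_bigmax (F := fun l => exps k' l) l) _.
  exact: (leq_bigmax (F := fun k' : 'I_(size Qs) => \max_(l < n) exps k' l) (Ordinal ltk')).
exists [multinom if (0 < exps k l)%N then 0%N else N | l < n] => [l Qkl|l Qkl].
  by rewrite mnmE Qkl.
apply/I_cap => k' ltk'; case: (eqVneq k' k) => [->|neq].
  exact: (ideal_memX_le (ideal_gen_ideal _) (irred_ideal_pure_pow Qkl) (lem_addr _ _)).
have [l' /andP [Qk'l' /eqP Qkl']] := other k' ltk' neq.
apply: (ideal_memX_le (ideal_gen_ideal _) (irred_ideal_pure_pow Qk'l')).
apply/mnm_lepP => t; rewrite mnmDE mnmE !mulmnE !mnm1E.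
case: (eqVneq l' t) => [<-|]; last by rewrite mul0n.
by rewrite Qkl' mul1n /= (leq_trans (le_N _ _ ltk')) ?leq_addl.
Qed.

End MinimalPrimes.

Theorem lemma2p2 (K : fieldType) (n : nat) (I : {mpoly K[n]} -> Prop)
  (G : seq 'X_{1..n}) (Qs : seq ('I_n -> nat)) :
  is_min_mon_gens I G ->
  support2 G ->
  minimal_irred_decomp I Qs ->
  (exists i j : 'I_n, i != j /\ (2 <= alpha G i j)%N) ->
  ~ ideal_eq (symbolic_pow I 2) (ideal_pow I 2).
Proof.
move=> [uniqG [IG antichain]] G2 [I_cap [_ Q_distinct]] [i [j [neq_ij alpha2]]].
have [u [v [Gu Gv su sv [lt_uv_i lt_vu_j v_min]]]] :=
  two_lowest_gens uniqG antichain alpha2.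
have gap_notin := gap_notin_pow2 neq_ij su sv lt_uv_i lt_vu_j IG G2 Gu v_min.
suff gap_sym : symbolic_pow I 2 'X_[u + v - (U_(i) + U_(j))].
  by move=> sym_eq_pow; apply/gap_notin/sym_eq_pow.
move=> P Pmin; have [k ltk PE] := min_prime_var_ideal I_cap Pmin.
have [h h0 Ih] := component_witness I_cap ltk
  (fun k' => min_prime_other_component I_cap Q_distinct Pmin PE ltk).
exists 'X_[h + h]; split.
  by move/PE; apply: var_idealX_avoid => l Qkl; rewrite mnmDE h0.
have IX w : w \in G -> I 'X_[w] by move=> Gw; apply/IG/ideal_gen_mem; exists w.
have [l1 [l2 [Ql1 Ql2 /mnm_lepP le_gap]]] := pure_pows_below_gap neq_ij su sv
  lt_uv_i lt_vu_j (component_memX I_cap ltk (IX u Gu)) (component_memX I_cap ltk (IX v Gv)).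
rewrite -mpolyXD; apply: ideal_pow2_memX (Ih _ Ql1) (Ih _ Ql2) _.
by apply/mnm_lepP => t; have := le_gap t; rewrite !mnmDE; lia.
Qed.
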